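(* Let $q\in(0,\infty)$. For each choice of sign, all second-order minors of the infinite matrix $A^{\pm}=(\alpha^{\pm}_{kn})_{k,n\ge0}$ are non-negative; in particular $\alpha^{\pm}_{k,n}\alpha^{\pm}_{k+1,n+1}-\alpha^{\pm}_{k+1,n}\alpha^{\pm}_{k,n+1}\ge0$ for all $k,n\ge0$.
   Context: For $q>0$ and integers $k,n\ge 0$ ($k$ the row index, $n$ the column index), define $$\alpha^{\pm}_{kn}=\frac{k!\,\Gamma(n+2q)}{2^{n+k+2q}}\sum_{m=0}^{\min\{n,k\}}\frac{1\pm(-1)^m}{\Gamma(m+2q)\,m!\,(n-m)!\,(k-m)!}.$$ *)

From Stdlib Require Import Reals Arith.
Open Scope R_scope.

Fixpoint poch (a : R) (l : nat) : R :=
  match l with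
  | O => 1
  | S l' => poch a l' * (a + INR l')
  end.

(* For m <= n:  Gamma(n+2q)/Gamma(m+2q) = poch (m+2q) (n-m). *)
Definition gamma_ratio (q : R) (n m : nat) : R :=
  poch (INR m + 2 * q) (n - m).

(* Sign: pm = true gives alpha^+, pm = false gives alpha^-. *)
Definition sgn (pm : bool) : R := if pm then 1 else -1.

(* alpha^{pm}_{k n} with k the row index, n the column index. *)
Definition alpha (pm : bool) (q : R) (k n : nat) : R :=
  INR (Factorial.fact k) / Rpower 2 (INR (n + k) + 2 * q) *
  sum_f_R0 (fun m =>
      (1 + sgn pm * (-1) ^ m) * gamma_ratio q n m
      / (INR (Factorial.fact m) * INR (Factorial.fact (n - m)) * INR (Factorial.fact (k - m))))
    (Nat.min n k).

From Stdlib Require Import Reals Lra Lia Psatz.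
Open Scope R_scope.

(* Since [Gamma(n+2q) = Gamma(m+2q) (m+2q)_(n-m)], the matrix factors as
   [alpha k n = r_k c_n * sum_m w_m u_k(m) u_n(m)] with positive row and column
   scales [r], [c], non-negative weights [w_m = (1 +- (-1)^m) / ((2q)_m m!)] and
   the kernel [u_k(m) = 1/(k-m)!] (zero for [m > k]).  By the log-concavity of
   [1/j!] this kernel is totally positive of order 2.  Symmetrising in the two
   summation indices writes a 2x2 minor of such a kernel sum as half of
   [sum_{i,j} w_i w_j D_k(i,j) D_n(i,j)], where [D_k], [D_n] are 2x2 minors of [u]
   in the same columns, hence of the same sign. *)

Lemma sum_f_R0_mult (a b : nat -> R) M N :
  sum_f_R0 a M * sum_f_R0 b N =
  sum_f_R0 (fun i => sum_f_R0 (fun j => a i * b j) N) M.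
Proof.
  induction M as [|M IH]; simpl.
  - rewrite scal_sum. apply sum_eq; intros; ring.
  - rewrite Rmult_plus_distr_r, IH, scal_sum. f_equal. apply sum_eq; intros; ring.
Qed.

Lemma sum_f_R0_swap (F : nat -> nat -> R) M N :
  sum_f_R0 (fun i => sum_f_R0 (fun j => F i j) N) M =
  sum_f_R0 (fun j => sum_f_R0 (fun i => F i j) M) N.
Proof.
  induction M as [|M IH]; simpl.
  - apply sum_eq; intros; reflexivity.
  - rewrite IH, <- sum_plus. apply sum_eq; intros; reflexivity.
Qed.

Lemma sum_f_R0_trailing_zeros (F : nat -> R) a d :
  (forall i, (a < i)%nat -> F i = 0) -> sum_f_R0 F (a + d) = sum_f_R0 F a.
Proof.
  intro F0. induction d as [|d IH].
  - rewrite Nat.add_0_r; reflexivity.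
  - rewrite Nat.add_succ_r. simpl. rewrite IH, F0 by lia. ring.
Qed.

Definition tp2 (u : nat -> nat -> R) : Prop :=
  forall k1 k2 m1 m2, (k1 < k2)%nat -> (m1 < m2)%nat ->
    u k1 m2 * u k2 m1 <= u k1 m1 * u k2 m2.

Definition kernel_sum (w : nat -> R) (u : nat -> nat -> R) (N k n : nat) : R :=
  sum_f_R0 (fun m => w m * u k m * u n m) N.

Section KernelSum.

Variables (w : nat -> R) (u : nat -> nat -> R).
Hypotheses (w_nonneg : forall m, 0 <= w m) (u_tp2 : tp2 u).

Lemma tp2_minor_mul_nonneg k1 k2 n1 n2 m m' :
  (k1 < k2)%nat -> (n1 < n2)%nat ->
  0 <= (u k1 m * u k2 m' - u k1 m' * u k2 m) * (u n1 m * u n2 m' - u n1 m' * u n2 m).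
Proof.
  intros lt_k lt_n. destruct (Nat.lt_total m m') as [lt_m|[<-|lt_m]].
  - pose proof (u_tp2 _ _ _ _ lt_k lt_m). pose proof (u_tp2 _ _ _ _ lt_n lt_m).
    apply Rmult_le_pos; lra.
  - right. ring.
  - pose proof (u_tp2 _ _ _ _ lt_k lt_m). pose proof (u_tp2 _ _ _ _ lt_n lt_m).
    nra.
Qed.

Lemma kernel_sum_minor_nonneg N k1 k2 n1 n2 :
  (k1 < k2)%nat -> (n1 < n2)%nat ->
  0 <= kernel_sum w u N k1 n1 * kernel_sum w u N k2 n2
       - kernel_sum w u N k1 n2 * kernel_sum w u N k2 n1.
Proof.
  intros lt_k lt_n. unfold kernel_sum. rewrite !sum_f_R0_mult.
  set (T := fun i j => w i * u k1 i * u n1 i * (w j * u k2 j * u n2 j)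
                     - w i * u k1 i * u n2 i * (w j * u k2 j * u n1 j)).
  assert (minor_as_double_sum :
    sum_f_R0 (fun i => sum_f_R0 (fun j => w i * u k1 i * u n1 i * (w j * u k2 j * u n2 j)) N) N
    - sum_f_R0 (fun i => sum_f_R0 (fun j => w i * u k1 i * u n2 i * (w j * u k2 j * u n1 j)) N) N
    = sum_f_R0 (fun i => sum_f_R0 (fun j => T i j) N) N).
  { rewrite <- minus_sum. apply sum_eq; intros. rewrite <- minus_sum. reflexivity. }
  rewrite minor_as_double_sum.
  assert (symmetrised : 0 <= sum_f_R0 (fun i => sum_f_R0 (fun j => T i j) N) N
                            + sum_f_R0 (fun i => sum_f_R0 (fun j => T j i) N) N).
  { rewrite <- sum_plus. apply cond_pos_sum; intro i.
    rewrite <- sum_plus. apply cond_pos_sum; intro j.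
    replace (T i j + T j i) with
      (w i * w j * ((u k1 i * u k2 j - u k1 j * u k2 i) *
                    (u n1 i * u n2 j - u n1 j * u n2 i))) by (unfold T; ring).
    apply Rmult_le_pos; [apply Rmult_le_pos; auto|].
    apply tp2_minor_mul_nonneg; assumption. }
  rewrite (sum_f_R0_swap (fun j i => T i j)) in symmetrised. lra.
Qed.

End KernelSum.

Lemma fact_add_mul_le u s t :
  (Factorial.fact (u + s) * Factorial.fact (u + t) <=
   Factorial.fact u * Factorial.fact (u + s + t))%nat.
Proof.
  induction s as [|s IH].
  - rewrite !Nat.add_0_r. lia.
  - replace (u + S s)%nat with (S (u + s)) by lia.
    replace (S (u + s) + t)%nat with (S (u + s + t)) by lia.
    simpl Factorial.fact. nia.
Qed.

Definition inv_fact_sub (k m : nat) : R :=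
  if Nat.leb m k then / INR (Factorial.fact (k - m)) else 0.

Lemma inv_fact_sub_nonneg k m : 0 <= inv_fact_sub k m.
Proof.
  unfold inv_fact_sub. destruct (Nat.leb m k); [|lra].
  left; apply Rinv_0_lt_compat, INR_fact_lt_0.
Qed.

Lemma inv_fact_sub_tp2 : tp2 inv_fact_sub.
Proof.
  intros k1 k2 m m' lt_k lt_m.
  destruct (Nat.leb_spec m' k1).
  - unfold inv_fact_sub. rewrite !(proj2 (Nat.leb_le _ _)) by lia.
    replace (k1 - m)%nat with (k1 - m' + (m' - m))%nat by lia.
    replace (k2 - m')%nat with (k1 - m' + (k2 - k1))%nat by lia.
    replace (k2 - m)%nat with (k1 - m' + (m' - m) + (k2 - k1))%nat by lia.
    set (u := (k1 - m')%nat). set (s := (m' - m)%nat). set (t := (k2 - k1)%nat).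
    pose proof (le_INR _ _ (fact_add_mul_le u s t)) as fact_le.
    rewrite !mult_INR in fact_le.
    pose proof (INR_fact_lt_0 u). pose proof (INR_fact_lt_0 (u + s)).
    pose proof (INR_fact_lt_0 (u + t)). pose proof (INR_fact_lt_0 (u + s + t)).
    rewrite <- !Rinv_mult. apply Rinv_le_contravar; [nra|lra].
  - unfold inv_fact_sub at 1. rewrite (proj2 (Nat.leb_gt _ _)) by lia.
    rewrite Rmult_0_l. apply Rmult_le_pos; apply inv_fact_sub_nonneg.
Qed.

Lemma poch_add a m l : poch a (m + l) = poch a m * poch (a + INR m) l.
Proof.
  induction l as [|l IH].
  - rewrite Nat.add_0_r. simpl. ring.
  - rewrite Nat.add_succ_r. simpl. rewrite IH, plus_INR. ring.
Qed.

Lemma poch_pos a m : 0 < a -> 0 < poch a m.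
Proof.
  intro a_pos. induction m as [|m IH]; simpl; [lra|].
  apply Rmult_lt_0_compat; [exact IH|]. pose proof (pos_INR m); lra.
Qed.

Definition alpha_weight (pm : bool) (q : R) (m : nat) : R :=
  (1 + sgn pm * (-1) ^ m) / (poch (2 * q) m * INR (Factorial.fact m)).

Definition alpha_row_scale (q : R) (k : nat) : R :=
  INR (Factorial.fact k) / Rpower 2 (INR k + q).

Definition alpha_col_scale (q : R) (n : nat) : R :=
  poch (2 * q) n / Rpower 2 (INR n + q).

Lemma alpha_weight_nonneg pm q m : 0 < q -> 0 <= alpha_weight pm q m.
Proof.
  intro q_pos. unfold alpha_weight. apply Rmult_le_pos.
  - assert (sign_m : (-1) ^ m = 1 \/ (-1) ^ m = -1).
    { induction m as [|m IH]; simpl; [now left|].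
      destruct IH as [-> | ->]; [right|left]; ring. }
    destruct sign_m as [-> | ->]; destruct pm; unfold sgn; lra.
  - left. apply Rinv_0_lt_compat, Rmult_lt_0_compat;
      [apply poch_pos; lra | apply INR_fact_lt_0].
Qed.

Lemma alpha_row_scale_nonneg q k : 0 <= alpha_row_scale q k.
Proof.
  left. apply Rdiv_lt_0_compat; [apply INR_fact_lt_0 | apply exp_pos].
Qed.

Lemma alpha_col_scale_nonneg q n : 0 < q -> 0 <= alpha_col_scale q n.
Proof.
  left. apply Rdiv_lt_0_compat; [apply poch_pos; lra | apply exp_pos].
Qed.

Lemma alpha_factor pm q k n N : 0 < q -> (Nat.min n k <= N)%nat ->
  alpha pm q k n = alpha_row_scale q k * alpha_col_scale q n *
                   kernel_sum (alpha_weight pm q) inv_fact_sub N k n.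
Proof.
  intros q_pos le_N. unfold alpha, kernel_sum.
  replace N with (Nat.min n k + (N - Nat.min n k))%nat by lia.
  rewrite sum_f_R0_trailing_zeros.
  2:{ intros i lt_i. unfold inv_fact_sub.
      destruct (Nat.leb_spec i k), (Nat.leb_spec i n); try lia; ring. }
  rewrite !scal_sum. apply sum_eq; intros m le_m.
  unfold inv_fact_sub, alpha_weight, alpha_row_scale, alpha_col_scale, gamma_ratio.
  rewrite !(proj2 (Nat.leb_le _ _)) by lia.
  assert (split_power : Rpower 2 (INR (n + k) + 2 * q) =
                         Rpower 2 (INR k + q) * Rpower 2 (INR n + q)).
  { rewrite <- Rpower_plus, plus_INR. f_equal. ring. }
  assert (split_poch : poch (2 * q) n = poch (2 * q) m * poch (INR m + 2 * q) (n - m)).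
  { replace n with (m + (n - m))%nat at 1 by lia.
    rewrite poch_add, Rplus_comm. reflexivity. }
  rewrite split_power, split_poch.
  pose proof (poch_pos (2 * q) m ltac:(lra)).
  pose proof (exp_pos ((INR k + q) * ln 2)). pose proof (exp_pos ((INR n + q) * ln 2)).
  pose proof (INR_fact_neq_0 m). pose proof (INR_fact_neq_0 (n - m)).
  pose proof (INR_fact_neq_0 (k - m)).
  unfold Rpower. field. repeat split; lra.
Qed.

Lemma alpha_minor_nonneg pm q k1 k2 n1 n2 : 0 < q ->
  (k1 < k2)%nat -> (n1 < n2)%nat ->
  0 <= alpha pm q k1 n1 * alpha pm q k2 n2 - alpha pm q k1 n2 * alpha pm q k2 n1.
Proof.
  intros q_pos lt_k lt_n. set (N := (k1 + k2 + n1 + n2)%nat).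
  rewrite !(alpha_factor pm q _ _ N q_pos) by (unfold N; lia).
  pose proof (kernel_sum_minor_nonneg (alpha_weight pm q) inv_fact_sub
    (fun m => alpha_weight_nonneg pm q m q_pos) inv_fact_sub_tp2 N _ _ _ _ lt_k lt_n)
    as kernel_minor.
  pose proof (alpha_row_scale_nonneg q k1). pose proof (alpha_row_scale_nonneg q k2).
  pose proof (alpha_col_scale_nonneg q n1 q_pos).
  pose proof (alpha_col_scale_nonneg q n2 q_pos).
  match type of kernel_minor with 0 <= ?D =>
    replace (_ - _) with (alpha_row_scale q k1 * alpha_row_scale q k2 *
                          (alpha_col_scale q n1 * alpha_col_scale q n2) * D) by ring end.
  apply Rmult_le_pos; [apply Rmult_le_pos; apply Rmult_le_pos|]; assumption.
Qed.

Theorem proposition3p1 (q : R) (hq : 0 < q) (pm : bool) :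
  (forall k1 k2 n1 n2 : nat, (k1 < k2)%nat -> (n1 < n2)%nat ->
     alpha pm q k1 n1 * alpha pm q k2 n2 - alpha pm q k1 n2 * alpha pm q k2 n1 >= 0)
  /\
  (forall k n : nat,
     alpha pm q k n * alpha pm q (S k) (S n) - alpha pm q (S k) n * alpha pm q k (S n) >= 0).
Proof.
  split.
  - intros k1 k2 n1 n2 lt_k lt_n. apply Rle_ge, alpha_minor_nonneg; assumption.
  - intros k n. pose proof (alpha_minor_nonneg pm q k (S k) n (S n) hq
                              (Nat.lt_succ_diag_r k) (Nat.lt_succ_diag_r n)).
    lra.
Qed.
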